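(* Let $k\ge 2$, let $H$ be a digraph (possibly with loops), and let $D$ be an $H$-colored local tournament. If every directed cycle in $D$ has $H$-length at most $k-2$, then $D$ has a $(k,H)$-kernel.
   Context: All digraphs are finite. A local tournament is a digraph $D$ such that for every vertex $x$, both the subdigraph induced by the in-neighbourhood $N^-(x)$ and that induced by the out-neighbourhood $N^+(x)$ are tournaments (every two distinct vertices joined by exactly one arc). $D$ has no loops and comes with a map $\rho: A(D)\to V(H)$. For a walk $W=(x_0,\ldots,x_n)$ in $D$, there is an obstruction on $x_i$ if $(\rho(x_{i-1},x_i),\rho(x_i,x_{i+1})) \notin A(H)$; for an open walk this is considered at internal vertices $x_i$, $1\le i\le n-1$, for a closed walk (such as a cycle) at all $i\in\{0,\ldots,n-1\}$ with indices modulo $n$. $O_H(W)$ is the set of indices with an obstruction; the $H$-length is $l_H(W)=|O_H(W)|+1$ for open $W$ and $|O_H(W)|$ for closed $W$. A $(k,H)$-kernel ($k\ge2$) is a set $S\subseteq V(D)$ such that for every two distinct $u,v\in S$ every directed $uv$-path in $D$ has $H$-length at least $k$, and for every $x\in V(D)\setminus S$ there is a directed path from $x$ to a vertex of $S$ of $H$-length at most $k-1$. *)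

From mathcomp Require Import all_boot.
Set Implicit Arguments. Unset Strict Implicit. Unset Printing Implicit Defensive.

(* A digraph D on a finite vertex type V is given by its arc relation [arc];
   H is a digraph (possibly with loops) on a finite type C of colours, given by
   its arc relation [H]; rho : V -> V -> C is the colouring of arcs (only its
   values on arcs of D matter). *)

Definition tournament_on {V : finType} (arc : rel V) (A : pred V) : Prop :=
  forall u v, A u -> A v -> u != v -> (arc u v (+) arc v u).

Definition local_tournament {V : finType} (arc : rel V) : Prop :=
  irreflexive arc /\
  forall x, tournament_on arc (fun y => arc y x) /\
            tournament_on arc (fun y => arc x y).

(* A walk is represented as x :: p (vertices x_0 = x, x_1, ..., x_n). *)
Definition arc_cols {V C : Type} (rho : V -> V -> C) (x : V) (p : seq V) : seq C :=
  pairmap rho x p.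

(* number of obstructions at internal vertices of the open walk x :: p *)
Definition obs_open {V C : Type} (H : rel C) (rho : V -> V -> C) x p : nat :=
  let cs := arc_cols rho x p in
  count (fun ab : C * C => ~~ H ab.1 ab.2) (zip cs (behead cs)).

Definition hlen_open {V C : Type} (H : rel C) (rho : V -> V -> C) x p : nat :=
  (obs_open H rho x p).+1.

(* closed walk x_0 = x, x_1, ..., x_{n-1} (p = [x_1;...;x_{n-1}]), back to x:
   obstructions at every vertex, indices mod n *)
Definition hlen_closed {V C : Type} (H : rel C) (rho : V -> V -> C) x p : nat :=
  let cs := arc_cols rho x (rcons p x) in
  count (fun ab : C * C => ~~ H ab.1 ab.2) (zip cs (rot 1 cs)).

Definition dipath {V : finType} (arc : rel V) (x : V) (p : seq V) : bool :=
  path arc x p && uniq (x :: p).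

Definition dicycle {V : finType} (arc : rel V) (x : V) (p : seq V) : bool :=
  path arc x (rcons p x) && uniq (x :: p).

Definition kH_kernel {V C : finType} (arc : rel V) (H : rel C) (rho : V -> V -> C)
    (k : nat) (S : {set V}) : Prop :=
  (forall u v, u \in S -> v \in S -> u != v ->
     forall p, dipath arc u p -> last u p = v -> k <= hlen_open H rho u p) /\
  (forall x, x \notin S ->
     exists p, [/\ dipath arc x p, last x p \in S & hlen_open H rho x p <= k - 1]).

From mathcomp Require Import all_boot zify.
From Stdlib Require Import Classical_Prop.
Set Implicit Arguments. Unset Strict Implicit. Unset Printing Implicit Defensive.

(* Say that x is near y when some directed xy-path has H-length at most k-1;
   a (k,H)-kernel is then a set that is independent for this relation and to
   which every other vertex is near.  Nearness implies reachability, and any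
   relation that implies reachability and holds between any two distinct
   vertices of a strong component has such a set: take an initial strong
   component K, such a set S for the rest by induction, and add to S a vertex
   of K that is not near S, if there is one.

   Two distinct vertices a, b of a strong component are indeed near.  Since
   out-neighbourhoods are tournaments, they lie on a common directed cycle: a
   cycle through a that misses b has an ear u -> o -> ... -> w leaving and
   re-entering it; either the predecessor of w on the cycle has an arc to o and
   the whole ear can be spliced in before w, or some cycle arc u' -> y has
   u' -> o but not y -> o, and the tournament on the out-neighbours of u'
   gives the detour u' -> o -> y.  The obstructions of the walk along such a
   cycle from a to b are obstructions of the cycle, so its H-length is at most
   that of the cycle plus one, i.e. at most k-1. *)

Lemma split_crossing (T : Type) (P : pred T) x s :
  has P (x :: s) -> ~~ P (last x s) ->
  exists s1 y s2, [/\ s = s1 ++ y :: s2, P (last x s1) & ~~ P y].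
Proof.
elim: s x => [|y s IHs] x /=; first by rewrite orbF => ->.
have [/andP[Px nPy] _ _ | noncross hasP nPlast] := boolP (P x && ~~ P y).
  by exists [::], y, s.
have /IHs/(_ nPlast) [s1 [z [s2 [-> Ps1 nPz]]]] : has P (y :: s).
  by move: hasP noncross => /=; case: (P x); case: (P y).
by exists (y :: s1), z, s2.
Qed.

Lemma count_zip_cat_le (T : Type) (Q : pred (T * T)) (s s' t t' : seq T) :
  count Q (zip s t) <= count Q (zip (s ++ s') (t ++ t')).
Proof. by elim: s t => [|x s IHs] [|y t] //=; rewrite leq_add2l. Qed.

Lemma hlen_open_rcons_le (V C : Type) (H : rel C) (rho : V -> V -> C) a b p1 p2 :
  hlen_open H rho a (rcons p1 b) <= (hlen_closed H rho a (p1 ++ b :: p2)).+1.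
Proof.
rewrite /hlen_open /hlen_closed /obs_open /arc_cols ltnS rcons_cat -cat_rcons.
rewrite pairmap_cat; case: (pairmap rho a (rcons p1 b)) => [|x cs] //=.
by rewrite /rot /= drop0 take0 -catA count_zip_cat_le.
Qed.

Section Reachability.
Variables (V : finType) (arc : rel V).

Lemma connect_exit (c : seq V) x y : x \in c -> y \notin c -> connect arc x y ->
  exists u o, [/\ u \in c, o \notin c, arc u o & connect arc o y].
Proof.
move=> xc yc /connectP[q xq yq]; subst y.
elim: q x xq xc yc => [|z q IHq] x /=; first by move=> _ ->.
move=> /andP[xz zq] xc lastc; have [zc | zc] := boolP (z \in c); first exact: IHq.
by exists x, z; split=> //; apply/connectP; exists q.
Qed.

Lemma connect_enter (c : seq V) x y : uniq c -> x \notin c -> connect arc x y -> y \in c ->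
  exists t w, [/\ path arc x (rcons t w), w \in c & uniq (x :: t ++ c)].
Proof.
move=> uc xc xy yc; pose e := [rel u v | (u \notin c) && arc u v].
have [w wc xw] : exists2 w, w \in c & connect e x w.
  case/connectP: xy => q xq yq; subst y.
  elim: q x xq xc yc => [|z q IHq] x /=; first by move=> _ /negbTE->.
  move=> /andP[xz zq] xc lastc; have [zc | zc] := boolP (z \in c).
    by exists z; last by apply: connect1; rewrite /= xc.
  have [w' wc' zw'] := IHq z zq zc lastc.
  by exists w' => //; apply: connect_trans zw'; apply: connect1; rewrite /= xc.
case/connectP: xw wc => q /shortenP[p ep up _] -> wc.
case/lastP: p ep up wc => [|t w'] ep up wc; first by rewrite /= (negbTE xc) in wc.
rewrite last_rcons in wc; exists t, w'; split=> //.
  by apply: sub_path ep => u v /andP[].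
have out_c : all [predC c] (x :: t).
  elim: t x ep {xy xc up} => [|z t IHt] x /=; first by rewrite !andbT => /andP[].
  by case/andP => /andP[-> _] /IHt.
rewrite -cat_cons cat_uniq uc andbT has_sym; apply/andP; split.
  by move: up; rewrite -rcons_cons rcons_uniq => /andP[].
by apply/hasPn => z /(allP out_c).
Qed.

Lemma connect_ear (c : seq V) a b : uniq c -> a \in c -> b \notin c ->
  connect arc a b -> connect arc b a ->
  exists u o t w, [/\ u \in c, arc u o, path arc o (rcons t w), w \in c & uniq (o :: t ++ c)].
Proof.
move=> uc ac bc ab ba; have [u [o [u_in oc uo ob]]] := connect_exit ac bc ab.
have [t [w [otw wc uniq_ear]]] := connect_enter uc oc (connect_trans ob ba) ac.
by exists u, o, t, w.
Qed.

Lemma strong_ucycle a b : a != b -> connect arc a b -> connect arc b a ->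
  exists2 c, ucycle arc c & a \in c.
Proof.
move=> ab_neq ab ba; have b_notin : b \notin [:: a] by rewrite mem_seq1 eq_sym.
have [u [o [t [w [+ uo + + uniq_ear]]]]] :=
  connect_ear (erefl : uniq [:: a]) (mem_head a [::]) b_notin ab ba.
rewrite !mem_seq1 => /eqP eu otw /eqP ew; subst u w.
exists (a :: o :: t); last exact: mem_head.
have perm : perm_eq ((o :: t) ++ [:: a]) (a :: o :: t) by rewrite perm_catC.
by apply/andP; split; [rewrite /= uo | rewrite -(perm_uniq perm)].
Qed.

Lemma exists_source (A : {set V}) x0 : x0 \in A ->
  exists2 x, x \in A & forall y, y \in A -> connect arc y x -> connect arc x y.
Proof.
move=> x0A; case: (arg_maxnP (fun z => #|[set w | connect arc z w]|) x0A) => x xA xmax.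
exists x => // y yA yx.
have sub : [set w | connect arc x w] \subset [set w | connect arc y w].
  by apply/subsetP => w; rewrite !inE; apply: connect_trans.
have /eqP reach_eq : [set w | connect arc x w] == [set w | connect arc y w].
  by rewrite eqEcard sub; apply: xmax.
by have := connect0 arc y; rewrite -in_set -reach_eq inE.
Qed.

End Reachability.

Section OutTournament.
Variables (V : finType) (arc : rel V).
Hypothesis out_tournament : forall x, tournament_on arc (arc x).

Lemma ucycle_insert x p1 p2 o t :
  cycle arc (x :: p1 ++ p2) -> uniq (o :: t ++ x :: p1 ++ p2) ->
  arc (last x p1) o -> path arc o t -> arc (last o t) (head x p2) ->
  ucycle arc (x :: p1 ++ o :: t ++ p2).
Proof.
move=> cyc uniq_ear p1o ot t_p2; apply/andP; split; last first.
  have perm : perm_eq ((x :: p1) ++ (o :: t) ++ p2) ((o :: t) ++ (x :: p1) ++ p2).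
    by rewrite perm_catCA.
  by rewrite -cat_cons (perm_uniq perm).
move: cyc {uniq_ear}; rewrite /= !rcons_cat !cat_path /= rcons_cat cat_path p1o ot.
by case: p2 t_p2 => [|y p2] /= => [-> /andP[-> _] | -> /andP[-> /andP[_ ->]]].
Qed.

Lemma ucycle_extend_head w p u o t :
  cycle arc (w :: p) -> u \in w :: p -> arc u o -> path arc o (rcons t w) ->
  uniq (o :: t ++ w :: p) ->
  exists c', [/\ ucycle arc c', {subset w :: p <= c'} & size (w :: p) < size c'].
Proof.
move=> cyc_wp uwp uo; rewrite rcons_path => /andP[ot tw] uniq_ear.
have grow p1 p2 s : p = p1 ++ p2 ->
    {subset w :: p <= w :: p1 ++ o :: s ++ p2} /\ size (w :: p) < size (w :: p1 ++ o :: s ++ p2).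
  move=> ->; split; last by rewrite /= !size_cat /= size_cat; lia.
  by move=> z; rewrite !(inE, mem_cat) => /or3P[] ->; rewrite ?orbT.
have [last_o | nlast_o] := boolP (arc (last w p) o).
  have [sub lt] := grow p [::] t (esym (cats0 p)).
  by exists (w :: p ++ o :: t ++ [::]); split=> //; apply: ucycle_insert; rewrite ?cats0.
have has_o : has (arc^~ o) (w :: p) by apply/hasP; exists u.
have [p1 [y [p2 [ep p1o nyo]]]] := split_crossing has_o nlast_o.
have oy : arc o y.
  have p1y : arc (last w p1) y.
    by move: cyc_wp; rewrite /= ep rcons_cat cat_path /= => /and3P[].
  have yo : y != o.
    apply: contraTneq uniq_ear => <-.
    by rewrite ep /= !(mem_cat, inE) eqxx !orbT.
  by have := out_tournament p1y p1o yo; rewrite (negbTE nyo).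
have [sub lt] := grow p1 (y :: p2) [::] ep.
exists (w :: p1 ++ o :: [::] ++ y :: p2); split=> //; apply: ucycle_insert => //.
- by rewrite -ep.
- apply: subseq_uniq uniq_ear; rewrite -ep /= eqxx.
  exact: cat_subseq (sub0seq t) (subseq_refl (w :: p)).
Qed.

Lemma ucycle_extend c u o t w :
  ucycle arc c -> u \in c -> arc u o -> path arc o (rcons t w) -> w \in c ->
  uniq (o :: t ++ c) -> exists c', [/\ ucycle arc c', {subset c <= c'} & size c < size c'].
Proof.
move=> cyc_c uc uo otw wc uniq_ear; case: (rot_to wc) => i p rot_c.
have /andP[cyc_wp _] : ucycle arc (w :: p) by rewrite -rot_c rot_ucycle.
have uwp : u \in w :: p by rewrite -rot_c mem_rot.
have uniq_ear' : uniq (o :: t ++ w :: p).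
  by rewrite -rot_c -cat_cons cat_uniq has_rot rot_uniq -cat_uniq.
have [c' [cyc_c' sub lt]] := ucycle_extend_head cyc_wp uwp uo otw uniq_ear'.
exists c'; split=> // [z | ]; first by rewrite -(mem_rot i) rot_c; apply: sub.
by rewrite -(size_rot i) rot_c.
Qed.

Lemma ucycle_through a b : a != b -> connect arc a b -> connect arc b a ->
  exists c, [/\ ucycle arc c, a \in c & b \in c].
Proof.
move=> ab_neq ab ba.
have [c0 cyc0 ac0] := strong_ucycle ab_neq ab ba.
have [n] := ubnP (#|V| - size c0); elim: n c0 cyc0 ac0 => // n IHn c cyc_c ac lt_c.
have [bc | bc] := boolP (b \in c); first by exists c.
have [u [o [t [w [uc uo otw wc uniq_ear]]]]] := connect_ear (ucycle_uniq cyc_c) ac bc ab ba.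
have [c' [cyc_c' sub lt_cc']] := ucycle_extend cyc_c uc uo otw wc uniq_ear.
apply: (IHn c' cyc_c' (sub a ac)).
have : size c' <= #|V| by rewrite -(card_uniqP (ucycle_uniq cyc_c')) max_card.
lia.
Qed.

End OutTournament.

Section Kernel.
Variables (V : finType) (arc : rel V) (near : V -> V -> Prop).

Definition independent (S : {set V}) :=
  forall u v, u \in S -> v \in S -> u != v -> ~ near u v.

Definition absorbing (A S : {set V}) :=
  forall x, x \in A -> x \notin S -> exists2 y, y \in S & near x y.

Lemma kernel_extend (B K S : {set V}) :
  (forall x y, x \in K -> y \in K -> x != y -> near x y) ->
  (forall u y, u \in S -> y \in K -> ~ near u y) ->
  S \subset B -> independent S -> absorbing B S ->
  exists2 S' : {set V}, S' \subset B :|: K & independent S' /\ absorbing (B :|: K) S'.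
Proof.
move=> nearK nearSK SB indS absS.
have [[s [sK s_far]] | K_near] := classic (exists s, s \in K /\ ~ exists2 y, y \in S & near s y).
  exists (s |: S).
    by apply/subsetP => z; rewrite !inE => /predU1P[-> | /(subsetP SB) ->]; rewrite ?sK ?orbT.
  split=> [u v | x].
    rewrite !inE => /predU1P[-> | uS] /predU1P[-> | vS]; first by rewrite eqxx.
    - by move=> _ sv; apply: s_far; exists v.
    - by move=> _; apply: nearSK.
    - exact: indS.
  rewrite !inE negb_or => /orP[xB | xK] /andP[xs xS].
    by have [y yS xy] := absS x xB xS; exists y; rewrite // inE yS orbT.
  by exists s; [rewrite setU11 | apply: nearK].
exists S; first by rewrite subsetU ?SB.
split=> // x; rewrite inE => /orP[xB | xK] xS; first exact: absS.
by apply: NNPP => x_far; apply: K_near; exists x.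
Qed.

Hypothesis near_connect : forall x y, near x y -> connect arc x y.
Hypothesis strong_near : forall x y, x != y -> connect arc x y -> connect arc y x -> near x y.

Lemma kernel_in_closed_set (A : {set V}) :
  (forall x y, x \in A -> connect arc x y -> y \in A) ->
  exists2 S : {set V}, S \subset A & independent S /\ absorbing A S.
Proof.
have [n] := ubnP #|A|; elim: n A => // n IHn A An A_closed.
have [-> | [x0 x0A]] := set_0Vmem A.
  by exists set0 => //; split=> [u | x]; rewrite inE.
have [x xA x_source] := exists_source arc x0A.
pose K := [set y in A | connect arc y x]; pose B := A :\: K.
have BK : B :|: K = A.
  by apply/setP => y; rewrite !inE; case: (y \in A); case: (connect arc y x).
have B_closed y z : y \in B -> connect arc y z -> z \in B.
  rewrite !inE => /andP[yK yA] yz; rewrite (A_closed y z yA yz) andbT.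
  by apply: contra yK => /andP[_ zx]; rewrite yA (connect_trans yz zx).
have Bn : #|B| < n.
  have BA : B \proper A.
    by apply/properP; split; [apply: subsetDl | exists x; rewrite ?inE ?xA ?connect0].
  by have := proper_card BA; lia.
have [S SB [indS absS]] := IHn B Bn B_closed.
have nearK y z : y \in K -> z \in K -> y != z -> near y z.
  rewrite !inE => /andP[yA yx] /andP[zA zx] yz; apply: strong_near => //.
  - exact: connect_trans yx (x_source z zA zx).
  - exact: connect_trans zx (x_source y yA yx).
have S_far u y : u \in S -> y \in K -> ~ near u y.
  move=> uS; rewrite inE => /andP[_ yx] /near_connect uy.
  have := subsetP SB u uS; rewrite !inE => /andP[/negP uK uA]; apply: uK.
  by rewrite uA (connect_trans uy yx).
by rewrite -BK; apply: kernel_extend nearK S_far SB indS absS.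
Qed.

Lemma exists_kernel : exists S : {set V}, independent S /\ absorbing [set: V] S.
Proof.
have [S _ kerS] := kernel_in_closed_set (fun x y _ _ => in_setT y).
by exists S.
Qed.

End Kernel.

Section HKernel.
Variables (V C : finType) (arc : rel V) (H : rel C) (rho : V -> V -> C) (k : nat).

Definition short_dipath x y :=
  exists p, [/\ dipath arc x p, last x p = y & hlen_open H rho x p <= k - 1].

Lemma short_dipath_connect x y : short_dipath x y -> connect arc x y.
Proof. by case=> p [/andP[xp _] <- _]; apply/connectP; exists p. Qed.

Lemma strong_short_dipath : 2 <= k ->
  (forall x, tournament_on arc (arc x)) ->
  (forall x p, dicycle arc x p -> hlen_closed H rho x p <= k - 2) ->
  forall a b, a != b -> connect arc a b -> connect arc b a -> short_dipath a b.
Proof.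
move=> k2 out_tournament short_cycles a b ab_neq ab ba.
have [c [cyc_c ac bc]] := ucycle_through out_tournament ab_neq ab ba.
case: (rot_to ac) => i p rot_c.
have cyc_ap : ucycle arc (a :: p) by rewrite -rot_c rot_ucycle.
have : b \in a :: p by rewrite -rot_c mem_rot.
rewrite inE eq_sym (negbTE ab_neq) /= => bp.
case/splitPr: bp cyc_ap => p1 p2 cyc_ap.
exists (rcons p1 b); split; [| by rewrite last_rcons |].
- case/andP: cyc_ap => + uniq_ap.
  rewrite /= rcons_cat /= -cat_rcons cat_path => /andP[ab_path _].
  by rewrite /dipath ab_path; move: uniq_ap; rewrite -cat_rcons -cat_cons cat_uniq => /andP[].
- apply: leq_trans (hlen_open_rcons_le H rho a b p1 p2) _.
  have -> : k - 1 = (k - 2).+1 by lia.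
  by rewrite ltnS; apply: short_cycles.
Qed.

End HKernel.

Theorem corollary29 (V C : finType) (arc : rel V) (H : rel C) (rho : V -> V -> C)
    (k : nat) :
  2 <= k ->
  local_tournament arc ->
  (forall x p, dicycle arc x p -> hlen_closed H rho x p <= k - 2) ->
  exists S : {set V}, kH_kernel arc H rho k S.
Proof.
move=> k2 [_ local] short_cycles.
have out_tournament x : tournament_on arc (arc x) by case: (local x).
have [S [indS absS]] := exists_kernel (@short_dipath_connect V C arc H rho k)
  (strong_short_dipath k2 out_tournament short_cycles).
exists S; split=> [u v uS vS uv p up upv | x xS].
  case: (leqP k (hlen_open H rho u p)) => // long.
  by case: (indS u v uS vS uv); exists p; split=> //; lia.
by have [y yS [p [xp xpy short]]] := absS x (in_setT x) xS; exists p; rewrite xpy.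
Qed.
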